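(* Let $K,T\subset\mathbb{R}^n$ be convex bodies and let $q=(q_1,\dots,q_m)$ be a closed $(K,T)$-Minkowski billiard trajectory with respect to the $K$-supporting hyperplanes $H_1,\dots,H_m$. Let $U$ be the inclusion-minimal linear subspace of $\mathbb{R}^n$ containing the outer unit normal vectors $n_K(q_1),\dots,n_K(q_m)$ normal to $H_1,\dots,H_m$. Then there is a selection $\{i_1,\dots,i_{\dim U+1}\}\subseteq\{1,\dots,m\}$ such that $\{q_{i_1},\dots,q_{i_{\dim U+1}}\}\in F(K)$.
   Context: A convex body is a compact convex set in $\mathbb{R}^n$ containing the origin in its interior. For a convex body $K$, $F(K)$ denotes the set of subsets of $\mathbb{R}^n$ which cannot be translated into the interior of $K$. For a convex set $C$ and $z\in\partial C$, $N_C(z)=\{v:\langle v,y-z\rangle\le 0\ \forall y\in C\}$. A closed polygonal curve $(q_1,\dots,q_m)$, $m\ge2$, always satisfies $q_j\ne q_{j+1}$ and $q_j\notin[q_{j-1},q_{j+1}]$ (indices mod $m$). A closed polygonal curve $q$ with vertices on $\partial K$ is a closed $(K,T)$-Minkowski billiard trajectory with respect to the $K$-supporting hyperplanes $H_1,\dots,H_m$ through $q_1,\dots,q_m$ if there are $p_1,\dots,p_m\in\partial T$, outer unit normals $n_K(q_j)\in N_K(q_j)$ normal to $H_j$, and $\mu_j\ge 0$ with $q_{j+1}-q_j\in N_T(p_j)$ and $p_{j+1}-p_j=-\mu_{j+1}n_K(q_{j+1})$ for all $j$. *)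

(* Points of R^n are row vectors 'rV[R]_n,
   R : realType, with the library's (product = Euclidean) topology. *)
From HB Require Import structures.
From mathcomp Require Import all_boot all_order all_algebra.
From mathcomp Require Import all_classical all_reals all_analysis.
Set Implicit Arguments. Unset Strict Implicit. Unset Printing Implicit Defensive.
Import Order.TTheory GRing.Theory Num.Theory.
Import numFieldNormedType.Exports.
Local Open Scope classical_set_scope.
Local Open Scope ring_scope.

Section Defs.
Variables (R : realType) (n : nat).
Notation vec := 'rV[R]_n.

Definition dotv (u v : vec) : R := \sum_(i < n) u 0 i * v 0 i.

Definition convex_set (C : set vec) : Prop :=
  forall x y, C x -> C y -> forall t : R, 0 <= t <= 1 ->
    C ((1 - t) *: x + t *: y).

Definition convex_body (K : set vec) : Prop :=
  compact K /\ convex_set K /\ (interior K) 0.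

Definition bdry (C : set vec) : set vec := closure C `\` interior C.

Definition F (K : set vec) : set (set vec) :=
  [set S | ~ exists t : vec, forall x, S x -> (interior K) (x + t)].

Definition normal_cone (C : set vec) (z : vec) : set vec :=
  [set v | forall y, C y -> dotv v (y - z) <= 0].

Definition in_segment (a b x : vec) : Prop :=
  exists t : R, 0 <= t <= 1 /\ x = (1 - t) *: a + t *: b.

Definition closed_polygonal_curve (m : nat) (q : 'I_m -> vec) : Prop :=
  (2 <= m)%N /\
  forall j : 'I_m, q j != q (ordS j) /\ ~ in_segment (q (ord_pred j)) (q (ordS j)) (q j).

(* q is a closed (K,T)-Minkowski billiard trajectory with respect to the
   K-supporting hyperplanes H_j = {x | <nK j, x - q j> = 0} through q_j,
   where nK j is the outer unit normal of K at q_j normal to H_j. *)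
Definition minkowski_billiard (K T : set vec) (m : nat) (q : 'I_m -> vec)
    (nK : 'I_m -> vec) : Prop :=
  closed_polygonal_curve q /\
  (forall j, bdry K (q j)) /\
  (forall j, normal_cone K (q j) (nK j) /\ dotv (nK j) (nK j) = 1) /\
  exists (p : 'I_m -> vec) (mu : 'I_m -> R),
    forall j : 'I_m,
      bdry T (p j) /\ 0 <= mu j /\
      normal_cone T (p j) (q (ordS j) - q j) /\
      p (ordS j) - p j = - (mu (ordS j) *: nK (ordS j)).

(* dimension of the minimal linear subspace containing the nK j:
   rank of the matrix whose rows are the nK j *)
Definition span_dim (m : nat) (nK : 'I_m -> vec) : nat :=
  \rank (\matrix_(j < m) nK j).

End Defs.

(** The reflection law telescopes around the closed curve to a nonnegative
    linear dependence [sum_j mu_j nK_j = 0].  It is nontrivial: if every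
    [mu_j] vanished, all [p_j] would coincide, so the steps [q_(j+1) - q_j],
    which sum to zero, would all be normals of [T] at one point [p]; as [0]
    lies inside [T], each nonzero such normal [v] has [<v, p> > 0], hence all
    steps would vanish.  By Caratheodory's theorem for cones the dependence
    can be taken with at most [rank + 1 = dim U + 1] nonzero coefficients
    [c_i].  If the translate by [t] of the corresponding [q_i] lay in the
    interior of [K], each [<nK_i, t>] would be negative, contradicting
    [sum_i c_i <nK_i, t> = 0]. *)
From HB Require Import structures.
From mathcomp Require Import all_boot all_order all_algebra.
From mathcomp Require Import all_classical all_reals all_analysis.
From mathcomp Require Import lra zify.
Set Implicit Arguments. Unset Strict Implicit. Unset Printing Implicit Defensive.
Import Order.TTheory GRing.Theory Num.Theory.
Import numFieldNormedType.Exports.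
Local Open Scope classical_set_scope.
Local Open Scope ring_scope.

Lemma subset_card_ext (T : finType) (S : {set T}) (k : nat) :
  (#|S| <= k <= #|T|)%N -> exists I : {set T}, S \subset I /\ #|I| = k.
Proof.
move=> /andP [hSk]; rewrite -(subnKC hSk); move: (k - #|S|)%N => d {hSk k}.
elim: d S => [|d IH] S hST.
  by exists S; rewrite addn0.
have /card_gt0P [x] : (0 < #|~: S|)%N by have := cardsC S; lia.
rewrite finset.in_setC => hx.
have [|I [hxSI hI]] := IH (x |: S); first by rewrite cardsU1 hx; lia.
exists I; split; first exact: fintype.subset_trans (finset.subsetUr _ _) hxSI.
by rewrite hI cardsU1 hx addnS.
Qed.

Lemma ordS_invariant_const (T : Type) (m : nat) (f : 'I_m -> T) :
  (forall j, f (ordS j) = f j) -> forall i j, f i = f j.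
Proof.
move=> fS.
suff f0 : forall k (hk : (k < m)%N) (h0 : (0 < m)%N), f (Ordinal hk) = f (Ordinal h0).
  move=> [i hi] [j hj]; have h0 : (0 < m)%N := leq_ltn_trans (leq0n i) hi.
  by rewrite (f0 _ hi h0) (f0 _ hj h0).
move=> k + h0; elim: k => [|k IH] hk; first by congr f; apply: val_inj.
have hk' := ltnW hk; rewrite -(IH hk') -(fS (Ordinal hk')); congr f.
by apply: val_inj; rewrite /= modn_small.
Qed.

Lemma big_ordS (V : nmodType) (m : nat) (f : 'I_m -> V) :
  \sum_j f (ordS j) = \sum_j f j.
Proof. by rewrite [RHS](reindex_inj (@ordS_inj m)). Qed.

Lemma telescope_ordS (V : zmodType) (m : nat) (f : 'I_m -> V) :
  \sum_j (f (ordS j) - f j) = 0.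
Proof. by rewrite sumrB big_ordS subrr. Qed.

Section Dependence.
Variables (R : fieldType) (n m : nat) (v : 'I_m -> 'rV[R]_n).

Let M := \matrix_(j < m) v j.

Lemma linear_dependence_in (S : {set 'I_m}) : (\rank M < #|S|)%N ->
  exists u : 'I_m -> R, [/\ exists j, u j != 0, forall j, u j != 0 -> j \in S
    & \sum_j u j *: v j = 0].
Proof.
move=> hS; pose f : 'I_#|S| -> 'I_m := @enum_val _ (mem S).
have f_inj : injective f by apply: enum_val_inj.
pose N := rowsub f M.
have rankN : (\rank N < #|S|)%N.
  by rewrite /N rowsubE; apply: leq_ltn_trans (mxrankM_maxr _ _) hS.
have kerN : kermx N != 0 by rewrite kermx_eq0 -row_leq_rank -ltnNge.
pose w := nz_row (kermx N).
have w_neq0 : w != 0 by rewrite nz_row_eq0.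
have wN : w *m N = 0 by apply/sub_kermxP/nz_row_sub.
exists (fun j => \sum_(i | f i == j) w 0 i); split.
- have /existsP [i wi] : [exists i, w 0 i != 0].
    apply: contraNT w_neq0 => /existsPn wi; apply/eqP/rowP => j.
    by rewrite mxE; apply/eqP; rewrite -[_ == _]negbK wi.
  by exists (f i); rewrite (big_pred1 i) // => i' /=; rewrite (inj_eq f_inj).
- move=> j; apply: contraR => jS; rewrite big_pred0 // => i.
  by apply/negbTE; apply: contraNN jS => /eqP <-; apply: enum_valP.
- under eq_bigr do rewrite scaler_suml big_mkcond.
  rewrite exchange_big /= -[RHS]wN mulmx_sum_row; apply: eq_bigr => i _.
  by rewrite row_rowsub rowK -big_mkcond /= (big_pred1 (f i)).
Qed.

Lemma linear_dependence_rank_lt (c : 'I_m -> R) : (exists j, c j != 0) ->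
  \sum_j c j *: v j = 0 -> (\rank M < m)%N.
Proof.
move=> [j cj] cv; rewrite ltn_neqAle rank_leq_row andbT.
apply: contraNN cj => /eqP rM.
have /mulmx_free_eq0 : row_free M by rewrite /row_free rM.
move=> /(_ _ (\row_i c i)); rewrite mulmx_sum_row.
under eq_bigr do rewrite mxE rowK.
by rewrite cv eqxx => /esym/eqP/rowP/(_ j); rewrite !mxE => ->.
Qed.

End Dependence.

Section Caratheodory.
Variables (R : realFieldType) (n m : nat) (v : 'I_m -> 'rV[R]_n).

Let M := \matrix_(j < m) v j.

Definition supp (c : 'I_m -> R) : {set 'I_m} := [set j | c j != 0].

Definition nonneg_dependence (c : 'I_m -> R) : Prop :=
  [/\ forall j, 0 <= c j, exists j, c j != 0 & \sum_j c j *: v j = 0].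

Lemma nonneg_dependence_shrink (c : 'I_m -> R) :
  nonneg_dependence c -> ((\rank M).+1 < #|supp c|)%N ->
  exists c', nonneg_dependence c' /\ (#|supp c'| < #|supp c|)%N.
Proof.
move=> [c_ge0 _ cv] big_supp.
have /card_gt0P [k kc] : (0 < #|supp c|)%N by lia.
set S := supp c :\ k.
have hS : (\rank M < #|S|)%N by move: big_supp; rewrite (cardsD1 k) kc add1n ltnS.
have [u [[j0 uj0] uS uv]] : exists u : 'I_m -> R,
    [/\ exists j, 0 < u j, forall j, u j != 0 -> j \in S & \sum_j u j *: v j = 0].
  have [w [[j1 wj1] wS wv]] := linear_dependence_in hS.
  have [wpos | wnpos] := pselect (exists j, 0 < w j); first by exists w.
  exists (fun j => - w j); split.
  - exists j1; rewrite oppr_gt0 lt_neqAle wj1 leNgt.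
    by apply/negP => wj; apply: wnpos; exists j1.
  - by move=> j; rewrite oppr_eq0; apply: wS.
  - by under eq_bigr do rewrite scaleNr; rewrite sumrN wv oppr0.
have u0 j : j \notin S -> u j = 0 by move=> /(contraNN (uS j)) /negPn /eqP.
(* the largest step [th] along [-u] keeping [c] nonnegative zeroes [c i1] *)
set i1 := [arg min_(i < j0 | 0 < u i) (c i / u i)]%O.
have [ui1 i1_min] : 0 < u i1 /\ forall i, 0 < u i -> c i1 / u i1 <= c i / u i.
  by rewrite /i1; case: arg_minP => // i ui imin; split => // i' /imin.
set th := c i1 / u i1.
have th_ge0 : 0 <= th by rewrite divr_ge0 ?c_ge0 ?ltW.
have i1S : i1 \in S by apply: uS; rewrite gt_eqF.
exists (fun j => c j - th * u j); split; first split.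
- move=> j; have [uj | uj] := ltP 0 (u j).
    by rewrite subr_ge0 -ler_pdivlMr //; apply: i1_min.
  by have := c_ge0 j; nra.
- exists k; rewrite u0 ?mulr0 ?subr0; first by rewrite inE in kc.
  by rewrite !inE eqxx.
- under eq_bigr do rewrite scalerBl -scalerA.
  by rewrite sumrB -scaler_sumr cv uv scaler0 subr0.
- have sub : supp (fun j => c j - th * u j) \subset supp c :\ i1.
    apply/fintype.subsetP => j; rewrite !inE => cuj; apply/andP; split.
      by apply: contraNN cuj => /eqP ->; rewrite /th divfK ?subrr // gt_eqF.
    apply: contraNN cuj => /eqP cj.
    by rewrite u0 ?mulr0 ?cj ?subrr // !inE cj eqxx andbF.
  apply: leq_ltn_trans (subset_leq_card sub) _.
  by rewrite [X in (_ < X)%N](cardsD1 i1); move: i1S; rewrite !inE => /andP [_ ->].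
Qed.

Lemma nonneg_dependence_caratheodory (c : 'I_m -> R) : nonneg_dependence c ->
  exists c', nonneg_dependence c' /\ (#|supp c'| <= (\rank M).+1)%N.
Proof.
have [N] := ubnP #|supp c|; elim: N c => // N IH c suppN dc.
have [small | big] := leqP #|supp c| (\rank M).+1; first by exists c.
have [c' [dc' lt_c'c]] := nonneg_dependence_shrink dc big.
by apply: IH dc'; apply: leq_trans lt_c'c _.
Qed.

End Caratheodory.

Section Geometry.
Variables (R : realType) (n : nat).
Notation vec := 'rV[R]_n.

Lemma dotv_suml (I : finType) (f : I -> vec) (t : vec) :
  dotv (\sum_j f j) t = \sum_j dotv (f j) t.
Proof.
rewrite /dotv; under eq_bigr => i _ do rewrite summxE big_distrl.
exact: exchange_big.
Qed.

Lemma dotv0l (u : vec) : dotv 0 u = 0.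
Proof. by rewrite /dotv big1 // => i _; rewrite mxE mul0r. Qed.

Lemma dotvZl a (u w : vec) : dotv (a *: u) w = a * dotv u w.
Proof. by rewrite /dotv mulr_sumr; apply: eq_bigr => i _; rewrite mxE mulrA. Qed.

Lemma dotvZr a (u w : vec) : dotv u (a *: w) = a * dotv u w.
Proof. by rewrite /dotv mulr_sumr; apply: eq_bigr => i _; rewrite mxE mulrCA. Qed.

Lemma dotvDr (u w z : vec) : dotv u (w + z) = dotv u w + dotv u z.
Proof. by rewrite /dotv -big_split; apply: eq_bigr => i _; rewrite mxE mulrDr. Qed.

Lemma dotv_gt0 (u : vec) : u != 0 -> 0 < dotv u u.
Proof.
have sq_ge0 i : 0 <= u 0 i * u 0 i by rewrite -expr2 sqr_ge0.
move=> u_neq0; rewrite lt_neqAle sumr_ge0 ?andbT //.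
apply: contraNN u_neq0; rewrite eq_sym => /eqP uu0; apply/eqP/rowP => i.
have /eqP := psumr_eq0P (fun j _ => sq_ge0 j) uu0 (i := i) isT.
by rewrite mulf_eq0 orbb mxE => /eqP.
Qed.

Lemma interior_add_scale (A : set vec) (z u : vec) :
  interior A z -> exists2 e : R, 0 < e & A (z + e *: u).
Proof.
move=> /nbhs_ballP [e e0 ze]; set w := `|u|.
have w1 : 0 < w + 1 by rewrite ltr_wpDl ?normr_ge0.
have w_lt1 : w / (w + 1) < 1 by rewrite ltr_pdivrMr // mul1r ltrDl.
exists (e / (w + 1) / 2); first by rewrite !divr_gt0.
apply: ze; rewrite mx_norm_ball /ball_ /= opprD addNKr normrN normrZ.
rewrite ger0_norm; last by rewrite !divr_ge0 ?ltW.
rewrite -[X in _ < X]mulr1 -!mulrA ltr_pM2l // mulrCA -[_^-1 * w]mulrC; lra.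
Qed.

Lemma normal_cone_interior_lt0 (C : set vec) (z u y : vec) :
  normal_cone C z u -> interior C y -> u != 0 -> dotv u (y - z) < 0.
Proof.
move=> Nzu Cy u_neq0; have [e e0 Cye] := interior_add_scale u Cy.
have : dotv u (y - z) + e * dotv u u <= 0.
  by rewrite -dotvZr -dotvDr addrAC; apply: Nzu.
by have := dotv_gt0 u_neq0; nra.
Qed.

Lemma normal_cone_interior_steps_eq0 (T : set vec) (m : nat) (q : 'I_m -> vec)
    (p : vec) :
  interior T 0 -> (forall j, normal_cone T p (q (ordS j) - q j)) ->
  forall j, q (ordS j) = q j.
Proof.
move=> T0 Np; pose a j := dotv (q (ordS j) - q j) (0 - p).
have a_lt0 j : q (ordS j) != q j -> a j < 0.
  by rewrite -subr_eq0; apply: normal_cone_interior_lt0 (Np j) T0.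
have Na_ge0 j : 0 <= - a j.
  rewrite oppr_ge0; have [step0 | /a_lt0/ltW //] := eqVneq (q (ordS j)) (q j).
  by rewrite /a step0 subrr dotv0l.
have sum_a : \sum_j - a j = 0 by rewrite sumrN -dotv_suml telescope_ordS dotv0l oppr0.
move=> j; apply/eqP; apply: contraT => /a_lt0.
by rewrite -oppr_gt0 (psumr_eq0P (fun i _ => Na_ge0 i) sum_a) ?ltxx.
Qed.

Lemma minkowski_billiard_nonneg_dependence (K T : set vec) (m : nat)
    (q nK : 'I_m -> vec) :
  interior T 0 -> minkowski_billiard K T q nK -> exists mu, nonneg_dependence nK mu.
Proof.
move=> T0 [[m_ge2 q_curve] [_ [_ [p [mu billiard]]]]].
have dp j : p (ordS j) - p j = - (mu (ordS j) *: nK (ordS j)) := (billiard j).2.2.2.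
exists mu; split=> [j | | ]; first exact: (billiard j).2.1.
- apply/existsP; apply: contraT; rewrite negb_exists => /forallP mu0.
  have pS j : p (ordS j) = p j.
    by apply/eqP; rewrite -subr_eq0 dp (eqP (negPn (mu0 _))) scale0r oppr0.
  pose i0 : 'I_m := Ordinal (ltnW m_ge2).
  have Np j : normal_cone T (p i0) (q (ordS j) - q j).
    by rewrite (ordS_invariant_const pS i0 j); apply: (billiard j).2.2.1.
  by have [/eqP] := q_curve i0; rewrite (normal_cone_interior_steps_eq0 T0 Np).
- apply/eqP; rewrite -oppr_eq0 -sumrN -(big_ordS (fun j => - (mu j *: nK j))).
  by rewrite -(eq_bigr _ (fun j _ => dp j)) telescope_ordS.
Qed.

Lemma nonneg_dependence_not_translatable (K : set vec) (m : nat)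
    (q nK : 'I_m -> vec) (c : 'I_m -> R) (I : {set 'I_m}) :
  nonneg_dependence nK c -> (forall j, normal_cone K (q j) (nK j)) ->
  (forall j, nK j != 0) -> supp c \subset I -> F K (q @` [set i | i \in I]).
Proof.
move=> [c_ge0 [j0 cj0] cnK] NK nK0 cI [t qt].
pose a j := c j * dotv (nK j) t.
have nKt_lt0 j : c j != 0 -> dotv (nK j) t < 0.
  move=> cj; have Kt : interior K (q j + t).
    by apply: qt; exists j => //; apply: (fintype.subsetP cI); rewrite inE.
  by have := normal_cone_interior_lt0 (NK j) Kt (nK0 j); rewrite addrAC subrr add0r.
have Na_ge0 j : 0 <= - a j.
  have [c0 | /nKt_lt0] := eqVneq (c j) 0; first by rewrite /a c0 mul0r oppr0.
  by have := c_ge0 j; rewrite oppr_ge0 /a; nra.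
have sum_a : \sum_j - a j = 0.
  by rewrite sumrN -(eq_bigr _ (fun j _ => dotvZl _ _ _)) -dotv_suml cnK dotv0l oppr0.
have /eqP := psumr_eq0P (fun j _ => Na_ge0 j) sum_a (i := j0) isT.
by rewrite oppr_eq0 mulf_eq0 (negbTE cj0) lt_eqF ?nKt_lt0.
Qed.

End Geometry.

Theorem proposition3p10 (R : realType) (n : nat) (K T : set 'rV[R]_n)
    (m : nat) (q : 'I_m -> 'rV[R]_n) (nK : 'I_m -> 'rV[R]_n) :
  convex_body K -> convex_body T ->
  minkowski_billiard K T q nK ->
  exists I : {set 'I_m},
    #|I| = (span_dim nK).+1 /\ F K (q @` [set i | i \in I]).
Proof.
move=> _ [_ [_ T0]] billiard.
have [mu dmu] := minkowski_billiard_nonneg_dependence T0 billiard.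
have [c [dc supp_c]] := nonneg_dependence_caratheodory dmu.
have [_ [j0 cj0] cnK] := dc.
have rank_lt_m : (span_dim nK < m)%N := linear_dependence_rank_lt (ex_intro _ j0 cj0) cnK.
have [I [cI cardI]] : exists I : {set 'I_m}, supp c \subset I /\ #|I| = (span_dim nK).+1.
  by apply: subset_card_ext; rewrite supp_c card_ord.
have [_ [_ [NK _]]] := billiard.
exists I; split=> //; apply: nonneg_dependence_not_translatable dc _ _ cI => j.
  exact: (NK j).1.
by apply/eqP => nK0; have := (NK j).2; rewrite nK0 dotv0l => /eqP; rewrite eq_sym oner_eq0.
Qed.
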